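(* Let $f$, $X_n$, $X$, $Y$ be as in the context and let $n\geq 2$ (equivalently $f(n)\geq 2$). Every finite subgraph $\Gamma$ of $X$ with $|V\Gamma|\leq |VX_n|=(2^{2^{2n}}f(n)+1)f(n)$ admits a coarse $f(n)$-wiring into $Y$ of volume at most $2|VX_n|$. Hence \[ \mathrm{wir}^{f(n)}_{X\to Y}\big(|VX_n|\big)\leq 2|VX_n|. \]
   Context: Fix a function $f:\mathbb{N}\to\mathbb{N}$ (with $\mathbb{N}=\{1,2,\dots\}$) that is surjective, satisfies $f(1)=1$, $2\leq f(n)\leq n$ for all $n\geq 2$, and $|f^{-1}(k)|=\infty$ for every $k\geq 2$. For $n\in\mathbb{N}$ let $X_n$ be the graph with vertex set $\{0,1,\dots,f(n)-1\}\times\{0,1,\dots,2^{2^{2n}}f(n)\}$, with edges $(i,j)(i,j+1)$ for all $0\leq i\leq f(n)-1$, $0\leq j\leq 2^{2^{2n}}f(n)-1$, and $(i,j)(i+1,j)$ for all $0\leq i\leq f(n)-2$ and all $j$ that are multiples of $2^{2^{2n}}$. Let $Y_n$ be defined in the same way with $2^{2^{2n}}$ replaced everywhere by $2^{2^{2n+1}}$. Let $X=\bigsqcup_{n\geq1}X_n$ and $Y=\bigsqcup_{n\geq 1}Y_n$ (disjoint unions). A wiring of a finite graph $\Gamma$ into a graph $Y$ is a continuous map $g:\Gamma\to Y$ sending vertices to vertices and each edge onto a union of edges (a path between the images of its endpoints, or a single vertex if these coincide). It is a coarse $k$-wiring if each vertex of $Y$ has at most $k$ preimage vertices and each edge of $Y$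 is contained in the images of at most $k$ edges of $\Gamma$. Its volume is the number of vertices in its image. $\mathrm{wir}^k(\Gamma\to Y)$ is the minimal volume of a coarse $k$-wiring ($+\infty$ if none), and $\mathrm{wir}^k_{X\to Y}(n)=\max\{\mathrm{wir}^k(\Gamma\to Y):\Gamma\subseteq X,\ |V\Gamma|\leq n\}$. *)

From mathcomp Require Import all_boot.
Set Implicit Arguments. Unset Strict Implicit. Unset Printing Implicit Defensive.

(* Vertices of the disjoint unions X, Y are encoded as triples ((m, i), j):
   component index m >= 1 and grid coordinates (i, j). *)
Definition vtx := (nat * nat * nat)%type.

Definition baseX (m : nat) : nat := 2 ^ (2 ^ (2 * m)).
Definition baseY (m : nat) : nat := 2 ^ (2 ^ (2 * m).+1).

Definition gvert (a f : nat -> nat) (x : vtx) : bool :=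
  let: ((m, i), j) := x in [&& 1 <= m, i < f m & j <= a m * f m].

Definition gadj (a f : nat -> nat) (x y : vtx) : bool :=
  let: ((m, i), j) := x in
  let: ((m', i'), j') := y in
  [&& gvert a f x, gvert a f y, m == m' &
     ((i == i') && ((j' == j.+1) || (j == j'.+1)))
  || [&& j == j', a m %| j & (i' == i.+1) || (i == i'.+1)]].

Definition Xvert f := gvert baseX f.
Definition Xadj f := gadj baseX f.
Definition Yvert f := gvert baseY f.
Definition Yadj f := gadj baseY f.

Definition cardVXn (f : nat -> nat) (n : nat) : nat := (baseX n * f n + 1) * f n.

(* A finite subgraph Gamma of X, given by a vertex list VG and an edge list EG
   (each undirected edge listed once, in one orientation). *)
Definition subgraphX (f : nat -> nat) (VG : seq vtx) (EG : seq (vtx * vtx)) : Prop :=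
  [/\ uniq VG, all (Xvert f) VG, uniq EG,
      (forall e, e \in EG -> [/\ e.1 \in VG, e.2 \in VG & Xadj f e.1 e.2]) &
      (forall u v, (u, v) \in EG -> (v, u) \notin EG)].

(* A wiring: vertex map gv and, for every edge e = (u,v), a path
   gv u :: gp e in Y from gv u to gv v (simple path; the single vertex
   [gv u] when gv u = gv v). *)
Definition wiring (f : nat -> nat) (VG : seq vtx) (EG : seq (vtx * vtx))
  (gv : vtx -> vtx) (gp : vtx * vtx -> seq vtx) : Prop :=
  (forall u, u \in VG -> Yvert f (gv u)) /\
  (forall e, e \in EG ->
     [/\ path (Yadj f) (gv e.1) (gp e),
         last (gv e.1) (gp e) = gv e.2 &
         uniq (gv e.1 :: gp e)]).

Definition edge_in (y y' : vtx) (p : seq vtx) : bool :=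
  has (fun z : vtx * vtx => ((z.1 == y) && (z.2 == y')) || ((z.1 == y') && (z.2 == y)))
      (zip p (behead p)).

Definition coarse_wiring (k : nat) (f : nat -> nat) (VG : seq vtx) (EG : seq (vtx * vtx))
  (gv : vtx -> vtx) (gp : vtx * vtx -> seq vtx) : Prop :=
  [/\ wiring f VG EG gv gp,
      (forall y, count (fun u => gv u == y) VG <= k) &
      (forall y y', Yadj f y y' ->
         count (fun e => edge_in y y' (gv e.1 :: gp e)) EG <= k)].

Definition volume (VG : seq vtx) (EG : seq (vtx * vtx))
  (gv : vtx -> vtx) (gp : vtx * vtx -> seq vtx) : nat :=
  size (undup (map gv VG ++ flatten (map (fun e => gv e.1 :: gp e) EG))).

Definition good_f (f : nat -> nat) : Prop :=
  [/\ f 1 = 1,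
      (forall n, 2 <= n -> 2 <= f n <= n),
      (forall k, 1 <= k -> exists n, 1 <= n /\ f n = k) &
      (forall k, 2 <= k -> forall N, exists n, N <= n /\ f n = k)].

From mathcomp Require Import all_boot zify.
Set Implicit Arguments. Unset Strict Implicit. Unset Printing Implicit Defensive.

(* Component X_n is folded onto the first column of Y_n with heights kept, so
   every vertex and every vertical edge of Y_n is hit at most f(n) times, and
   the horizontal edges (rungs) of X_n collapse to points.  A component X_m
   with m <> n keeps its columns, and each block of b_X(m) = 2^2^2m consecutive
   heights between two rungs is stretched onto a block of b_Y(m) = b_X(m)^2
   heights: the extra b_Y(m) - b_X(m) heights are inserted right after one
   offset of the block.  This wiring is injective on X_m and sends rungs to
   rungs.  For m > n we insert them after an offset carrying no vertex of
   Gamma, which exists since |V Gamma| <= |V X_n| < b_X(m); then every edge of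
   Gamma in X_m is wired onto one edge of Y_m.  So the image consists of the
   images of the vertices of Gamma together with the small components
   Y_1, ..., Y_(n-1), which have at most |V X_n| vertices altogether. *)

Lemma count_leq_keys (T : eqType) (s : seq T) (P : pred T) (k : T -> nat) (K : seq nat) :
  uniq s -> {in s &, forall x x', P x -> P x' -> k x = k x' -> x = x'} ->
  {in s, forall x, P x -> k x \in K} -> count P s <= size K.
Proof.
move=> us kinj kK; rewrite -size_filter -(size_map k); apply: uniq_leq_size.
- rewrite map_inj_in_uniq ?filter_uniq // => x x'.
  by rewrite !mem_filter => /andP [Px xs] /andP [Px' xs']; apply: kinj.
- by move=> z /mapP [x]; rewrite mem_filter => /andP [Px xs] ->; apply: kK.
Qed.

Lemma ltn_interval_index (g : nat -> nat) j j' p : {homo g : x y / x < y} ->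
  g j <= p < g j.+1 -> g j' <= p < g j'.+1 -> j = j'.
Proof.
move=> /leq_mono gmono.
wlog lt_jj' : j j' / j < j' => [hwlog|].
  by case: (ltngtP j j') => // ? ? ?; [|symmetry]; apply: hwlog.
by rewrite -gmono in lt_jj'; lia.
Qed.

Section Stretch.
Variables (a b : nat) (c : nat -> nat).
Hypotheses (a_gt0 : 0 < a) (leq_ab : a <= b).

(* Block t of length a is sent to block t of length b; the gap of length
   b - a follows offset c t. *)
Definition stretch_res t r := if r <= c t then r else r + (b - a).
Definition stretch j := j %/ a * b + stretch_res (j %/ a) (j %% a).

Lemma stretch_res_lt t r : r < a -> stretch_res t r < b.
Proof. by rewrite /stretch_res; case: ifP; lia. Qed.

Lemma stretch_resS t r : stretch_res t r < stretch_res t r.+1.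
Proof. by rewrite /stretch_res; case: ifP; case: ifP; lia. Qed.

Lemma stretchE t r : r < a -> stretch (t * a + r) = t * b + stretch_res t r.
Proof. by move=> lt_ra; rewrite /stretch divnMDl // modnMDl divn_small // modn_small // addn0. Qed.

Lemma stretch_mul t : stretch (t * a) = t * b.
Proof. by rewrite -[t * a]addn0 stretchE // /stretch_res leq0n addn0. Qed.

Lemma dvdn_stretch j : a %| j -> b %| stretch j.
Proof. by move=> /divnK <-; rewrite stretch_mul dvdn_mull. Qed.

Lemma ltn_stretch : {homo stretch : j j' / j < j'}.
Proof.
apply: homo_ltn => [|j]; first exact: ltn_trans.
rewrite {1 2}(divn_eq j a); set t := j %/ a; set r := j %% a.
have lt_ra : r < a by apply: ltn_pmod.
have := stretch_res_lt t lt_ra.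
have [lt_r1a | eq_r1a] : r.+1 < a \/ r.+1 = a by lia.
- by rewrite -[(t * a + r).+1]addnS !stretchE //; have := stretch_resS t r; lia.
- by rewrite stretchE // -[(t * a + r).+1]addnS eq_r1a -mulSnr stretch_mul; lia.
Qed.

Lemma leq_stretch_mul j F : j <= a * F -> stretch j <= b * F.
Proof.
rewrite leq_eqVlt => /orP [/eqP -> | lt_jaF]; first by rewrite mulnC stretch_mul mulnC.
by have := ltn_stretch lt_jaF; rewrite mulnC stretch_mul mulnC; lia.
Qed.

Lemma stretchS j : c (j %/ a) < a -> j %% a != c (j %/ a) ->
  stretch j.+1 = (stretch j).+1.
Proof.
rewrite {4 5}(divn_eq j a); set t := j %/ a; set r := j %% a => lt_ca ne_rc.
have lt_ra : r < a by apply: ltn_pmod.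
have [lt_r1a | eq_r1a] : r.+1 < a \/ r.+1 = a by lia.
- by rewrite -addnS !stretchE // /stretch_res; case: ifP; case: ifP; lia.
- rewrite -addnS eq_r1a -mulSnr stretch_mul stretchE // /stretch_res.
  by case: ifP; lia.
Qed.

End Stretch.

Lemma baseY_sqr m : baseY m = baseX m * baseX m.
Proof. by rewrite /baseY /baseX expnS mulnC expnM expnS expn1. Qed.

Lemma baseXS m : baseX m.+1 = baseX m * baseX m * (baseX m * baseX m).
Proof.
rewrite /baseX mulnS expnD mulnC (expnM 2 (2 ^ (2 * m)) (2 ^ 2)).
by rewrite !expnS expn0 muln1 !mulnA.
Qed.

Lemma baseX_ge2 m : 2 <= baseX m.
Proof. by rewrite /baseX (leq_exp2l 1) // expn_gt0. Qed.

Lemma leq_baseX m m' : m <= m' -> baseX m <= baseX m'.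
Proof. by move=> le_mm'; rewrite /baseX !leq_pexp2l // leq_mul2l. Qed.

Lemma leq_baseY m m' : m <= m' -> baseY m <= baseY m'.
Proof. by move=> le_mm'; rewrite /baseY !leq_pexp2l // ltnS leq_mul2l. Qed.

Lemma ltn_baseX m : m < baseX m.
Proof.
rewrite /baseX; have := ltn_expl (2 * m) (isT : 1 < 2).
have := ltn_expl (2 ^ (2 * m)) (isT : 1 < 2); lia.
Qed.

Lemma sqrS_leq_baseX m : 1 <= m -> m.+1 * m.+1 <= baseX m.
Proof.
case: m => [//|m] _; rewrite /baseX.
have le_exp : 2 * m.+2 <= 2 ^ (2 * m.+1).
  have -> : 2 ^ (2 * m.+1) = 4 * 4 ^ m by rewrite mulnS expnD expnM.
  have := ltn_expl m (isT : 1 < 4); lia.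
have := ltn_expl m.+2 (isT : 1 < 2).
have : 2 ^ (2 * m.+2) <= 2 ^ (2 ^ (2 * m.+1)) by rewrite leq_pexp2l.
rewrite mul2n -addnn expnD; nia.
Qed.

Lemma cardVXn_lt_baseX n F m : F <= n -> n < m -> (baseX n * F + 1) * F < baseX m.
Proof.
move=> le_Fn lt_nm; have := leq_baseX lt_nm; rewrite baseXS.
have := ltn_baseX n; have := baseX_ge2 n; set b := baseX n => b_ge2 lt_nb le_b4.
have : (b * F + 1) * F <= (b * b + 1) * b by apply: leq_mul; rewrite ?leq_add2r ?leq_mul; lia.
nia.
Qed.

Lemma low_components_bound n F : 2 <= n -> 2 <= F ->
  (n.-1 * n) * (baseY n.-1 * n).+1 <= (baseX n * F + 1) * F.
Proof.
case: n => [//|k] k_ge1 F_ge2 /=; rewrite baseY_sqr baseXS.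
have := sqrS_leq_baseX (k_ge1 : 1 <= k); have := baseX_ge2 k.
set X := baseX k => X_ge2 le_k1X.
have le_k3 : k.+1 * k.+1 * k.+1 <= X * X by nia.
have : (X * X * (X * X) * 2 + 1) * 2 <= (X * X * (X * X) * F + 1) * F.
  by apply: leq_mul => //; rewrite leq_add2r leq_mul.
have : k * k.+1 * (X * X * k.+1) <= k.+1 * k.+1 * k.+1 * (X * X).
  by rewrite [X * X * _]mulnC mulnA !leq_mul.
have : k.+1 * k.+1 * k.+1 * (X * X) <= X * X * (X * X) by apply: leq_mul.
nia.
Qed.

Lemma baseX_gt0 m : 0 < baseX m.
Proof. exact: leq_trans (baseX_ge2 m). Qed.

Lemma leq_baseXY m : baseX m <= baseY m.
Proof. by rewrite baseY_sqr leq_pmulr ?baseX_gt0. Qed.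

Lemma zip_map_iota (T : Type) (g : nat -> T) d s :
  zip (map g (iota s d.+1)) (map g (iota s.+1 d)) = map (fun k => (g k, g k.+1)) (iota s d).
Proof. by elim: d s => [|d IH] s //=; rewrite -IH. Qed.

Lemma path_map_iota (T : Type) (r : rel T) (g : nat -> T) d s :
  path r (g s) (map g (iota s.+1 d)) = all (fun k => r (g k) (g k.+1)) (iota s d).
Proof. by elim: d s => [|d IH] s //=; rewrite IH. Qed.

Lemma last_map_iota (T : Type) (g : nat -> T) d s :
  last (g s) (map g (iota s.+1 d)) = g (s + d).
Proof. by elim: d s => [|d IH] s /=; rewrite ?addn0 // IH addSnnS. Qed.

Lemma edge_inC y y' s : edge_in y y' s = edge_in y' y s.
Proof. by apply: eq_has => z; rewrite orbC. Qed.

Lemma gadj_cases a f u v : gadj a f u v -> exists m i i' j j',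
  [/\ u = ((m, i), j), v = ((m, i'), j'), gvert a f u, gvert a f v &
   (i = i' /\ (j' = j.+1 \/ j = j'.+1)) \/
   [/\ j = j', a m %| j & i' = i.+1 \/ i = i'.+1]].
Proof.
case: u v => [[m i] j] [[m' i'] j'] /and4P [Yu Yv /eqP em adj]; subst m'.
exists m, i, i', j, j'; split => //.
case/orP: adj => [/andP [/eqP ei /orP [] /eqP ej] | /and3P [/eqP ej a_j /orP [] /eqP ei]].
- by left; split; [|left].
- by left; split; [|right].
- by right; split; [| |left].
- by right; split; [| |right].
Qed.

Lemma Yvert_below f mc h h' : Yvert f (mc, h') -> h <= h' -> Yvert f (mc, h).
Proof. by case: mc => m c; rewrite /Yvert /gvert => /and3P [-> -> ?] ?; lia. Qed.

Lemma Yadj_column f mc h : Yvert f (mc, h.+1) ->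
  Yadj f (mc, h) (mc, h.+1) /\ Yadj f (mc, h.+1) (mc, h).
Proof.
case: mc => m c Yh1; have Yh := Yvert_below Yh1 (leqnSn h).
by move: Yh Yh1; rewrite /Yadj /gadj /Yvert => -> -> /=; rewrite !eqxx ?orbT.
Qed.

Lemma Yadj_component f (x y : vtx) : Yadj f x y -> [/\ Yvert f x, Yvert f y & x.1.1 = y.1.1].
Proof.
by case: x y => [[m c] h] [[m' c'] h']; rewrite /Yadj /gadj /Yvert => /and4P [-> -> /eqP ->].
Qed.

Lemma path_Yvert_component f x s : path (Yadj f) x s -> Yvert f x ->
  {in x :: s, forall z, Yvert f z /\ z.1.1 = x.1.1}.
Proof.
elim: s x => [|y s IH] x /= => [_ Yx z | /andP [/Yadj_component [_ Yy exy] ys] Yx z].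
  by rewrite inE => /eqP ->.
rewrite inE => /orP [/eqP -> // | zs].
by have [? ->] := IH y ys Yy z zs.
Qed.

Definition height_gap h1 h2 := if h1 <= h2 then h2 - h1 else h1 - h2.
Definition step_toward h1 h2 k := if h1 <= h2 then h1 + k else h1 - k.

Definition column_path (mc : nat * nat) h1 h2 : seq vtx :=
  [seq (mc, step_toward h1 h2 k) | k <- iota 1 (height_gap h1 h2)].

Definition Ypath (y1 y2 : vtx) : seq vtx :=
  if y1.1 == y2.1 then column_path y1.1 y1.2 y2.2 else [:: y2].

Lemma step_toward_gap h1 h2 : step_toward h1 h2 (height_gap h1 h2) = h2.
Proof. by rewrite /step_toward /height_gap; case: leqP; lia. Qed.

Lemma column_path_cons mc h1 h2 : (mc, h1) :: column_path mc h1 h2 =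
  [seq (mc, step_toward h1 h2 k) | k <- iota 0 (height_gap h1 h2).+1].
Proof. by rewrite /column_path /= /step_toward; case: ifP; rewrite ?addn0 ?subn0. Qed.

Lemma YpathE mc h1 h2 : Ypath (mc, h1) (mc, h2) = column_path mc h1 h2.
Proof. by rewrite /Ypath eqxx. Qed.

Lemma Ypath_rung (y1 y2 : vtx) : y1.1 != y2.1 -> Ypath y1 y2 = [:: y2].
Proof. by rewrite /Ypath => /negbTE ->. Qed.

Lemma column_path_wiring f mc h1 h2 : Yvert f (mc, h1) -> Yvert f (mc, h2) ->
  [/\ path (Yadj f) (mc, h1) (column_path mc h1 h2),
      last (mc, h1) (column_path mc h1 h2) = (mc, h2) &
      uniq ((mc, h1) :: column_path mc h1 h2)].
Proof.
move=> Yh1 Yh2; set g := fun k => (mc, step_toward h1 h2 k).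
have g0 : g 0 = (mc, h1) by rewrite /g /step_toward; case: ifP; rewrite ?addn0 ?subn0.
split.
- rewrite -g0 path_map_iota; apply/allP => k; rewrite mem_iota /g /step_toward /height_gap.
  case: ifP => le_h12 /andP [_ lt_k].
  + by rewrite addnS; apply: (Yadj_column _).1; apply: Yvert_below Yh2 _; lia.
  + rewrite (_ : h1 - k = (h1 - k.+1).+1); last lia.
    by apply: (Yadj_column _).2; apply: Yvert_below Yh1 _; lia.
- by rewrite -g0 last_map_iota add0n /g step_toward_gap.
- rewrite column_path_cons map_inj_in_uniq ?iota_uniq // => k k'.
  by rewrite !mem_iota /step_toward /height_gap; case: ifP => _ /andP [_ ?] /andP [_ ?] []; lia.
Qed.

Lemma edge_in_column_path mc h1 h2 y y' :
  edge_in y y' ((mc, h1) :: column_path mc h1 h2) ->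
  exists2 h, minn h1 h2 <= h < maxn h1 h2 &
    (y = (mc, h) /\ y' = (mc, h.+1)) \/ (y = (mc, h.+1) /\ y' = (mc, h)).
Proof.
rewrite column_path_cons /edge_in; set g := fun k => (mc, step_toward h1 h2 k).
rewrite [behead _]/= zip_map_iota.
case/hasP => z /mapP [k]; rewrite mem_iota => /andP [_ lt_k] -> /= edge_k.
move: lt_k edge_k; rewrite /g /step_toward /height_gap; case: ifP => le_h12 lt_k edge_k.
- exists (h1 + k); first by apply/andP; lia.
  by move: edge_k; rewrite addnS; case/orP => /andP [/eqP <- /eqP <-]; [left | right].
- exists (h1 - k.+1); first by apply/andP; lia.
  move: edge_k; rewrite (_ : h1 - k = (h1 - k.+1).+1); last lia.
  by case/orP => /andP [/eqP <- /eqP <-]; [right | left].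
Qed.

Lemma column_path_short mc h1 h2 : height_gap h1 h2 <= 1 ->
  {subset column_path mc h1 h2 <= [:: (mc, h2)]}.
Proof.
rewrite /column_path; case E: (height_gap h1 h2) => [|[|//]] _ z //=.
by rewrite inE => /eqP ->; rewrite -E step_toward_gap inE.
Qed.

Lemma edge_in_rung (y1 y2 y y' : vtx) : y1.1 != y2.1 ->
  edge_in y y' (y1 :: Ypath y1 y2) -> (y1 = y /\ y2 = y') \/ (y1 = y' /\ y2 = y).
Proof.
move=> ne_y12; rewrite Ypath_rung // /edge_in /= orbF.
by case/orP => /andP [/eqP -> /eqP ->]; [left | right].
Qed.

Section Wiring.
Variables (f : nat -> nat) (n : nat) (VG : seq vtx) (EG : seq (vtx * vtx)).

Definition free_offset m t r := t * baseX m + r \notin [seq u.2 | u <- VG & u.1.1 == m].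

(* [find] returns [baseX m] when every offset is occupied; then no gap lies
   inside the block.  This only happens for m <= n. *)
Definition cut m t := find (free_offset m t) (iota 0 (baseX m)).
Definition height m : nat -> nat :=
  if m == n then id else stretch (baseX m) (baseY m) (cut m).
Definition column m i := if m == n then 0 else i.
Definition wire_vertex (u : vtx) : vtx := ((u.1.1, column u.1.1 u.1.2), height u.1.1 u.2).
Definition wire_path (e : vtx * vtx) : seq vtx := Ypath (wire_vertex e.1) (wire_vertex e.2).

Local Notation G := wire_vertex.
Local Notation W e := (G e.1 :: wire_path e).

Lemma wire_vertexE m i j : G ((m, i), j) = ((m, column m i), height m j).
Proof. by []. Qed.

Lemma ltn_height m : {homo height m : j j' / j < j'}.
Proof.
rewrite /height; case: ifP => _ //.
exact: ltn_stretch _ (baseX_gt0 m) (leq_baseXY m).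
Qed.

Lemma height_inj m : injective (height m).
Proof. exact/incn_inj/leq_mono/ltn_height. Qed.

Lemma wire_vertex_eq u v : G u = G v ->
  [/\ u.1.1 = v.1.1, u.2 = v.2 & u.1.1 != n -> u.1.2 = v.1.2].
Proof.
case: u v => [[m i] j] [[m' i'] j'] [<-] + /height_inj ->.
by rewrite /column; case: ifP.
Qed.

Lemma wire_vertex_column u : u.1.1 != n -> (G u).1.2 = u.1.2.
Proof. by rewrite /= /column => /negbTE ->. Qed.

Lemma wire_vertex_inj u v : u.1.1 != n -> G u = G v -> u = v.
Proof.
move=> ne_un /wire_vertex_eq [].
by case: u v ne_un => [[m i] j] [[m' i'] j'] /= ne_un <- -> /(_ ne_un) ->.
Qed.

Lemma dvdn_height m j : m != n -> baseX m %| j -> baseY m %| height m j.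
Proof.
by rewrite /height => /negbTE ->; exact: (dvdn_stretch (baseY m) (cut m) (baseX_gt0 m)).
Qed.

Hypothesis fn_ge2 : 2 <= f n.

Lemma wire_vertex_Yvert u : Xvert f u -> Yvert f (G u).
Proof.
case: u => [[m i] j] /and3P [m_ge1 lt_if le_jX]; apply/and3P; split => //=.
  by rewrite /column; case: ifP => [/eqP -> | _]; first exact: leq_trans fn_ge2.
rewrite /height; case: ifP => _.
  by apply: leq_trans le_jX _; rewrite leq_mul2r leq_baseXY orbT.
exact: (leq_stretch_mul _ (baseX_gt0 m) (leq_baseXY m) le_jX).
Qed.

Lemma wire_path_wiring e : Xadj f e.1 e.2 ->
  [/\ path (Yadj f) (G e.1) (wire_path e),
      last (G e.1) (wire_path e) = G e.2 &
      uniq (G e.1 :: wire_path e)].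
Proof.
case: e => u v /=; case/gadj_cases => m [i] [i'] [j] [j'].
case=> [-> -> /wire_vertex_Yvert Yu /wire_vertex_Yvert Yv].
rewrite /wire_path !wire_vertexE in Yu Yv *; case=> [[ei _] | [ej X_j ei]]; subst.
  by rewrite YpathE; apply: column_path_wiring.
have [em | ne_mn] := eqVneq m n.
  by subst m; rewrite /column eqxx in Yu Yv *; rewrite YpathE; apply: column_path_wiring.
have ne_col : column m i != column m i' by rewrite /column (negbTE ne_mn); case: ei => ->; lia.
rewrite Ypath_rung /=; last by rewrite xpair_eqE eqxx.
rewrite inE !xpair_eqE (negbTE ne_col) andbF andbT; split => //.
apply/and4P; split; [exact: Yu | exact: Yv | exact: eqxx | apply/orP; right].
rewrite eqxx dvdn_height // /column (negbTE ne_mn).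
by case: ei => ->; rewrite eqxx ?orbT.
Qed.

(* A rung of X_n is wired to a point, so it traverses no edge of Y. *)
Lemma edge_in_wire_path e y y' : Xadj f e.1 e.2 -> edge_in y y' (W e) ->
  (exists m i j h, [/\ e.1.1 = (m, i), e.2.1 = (m, i),
      (e.1.2 = j /\ e.2.2 = j.+1) \/ (e.1.2 = j.+1 /\ e.2.2 = j),
      height m j <= h < height m j.+1 &
      (y = ((m, column m i), h) /\ y' = ((m, column m i), h.+1)) \/
      (y = ((m, column m i), h.+1) /\ y' = ((m, column m i), h))])
  \/ [/\ e.1.1.1 != n, e.1.1.1 = e.2.1.1, e.1.1.2 != e.2.1.2 &
      (G e.1 = y /\ G e.2 = y') \/ (G e.1 = y' /\ G e.2 = y)].
Proof.
case: e => u v /=; case/gadj_cases => m [i] [i'] [j] [j'] [-> -> _ _].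
rewrite /wire_path !wire_vertexE; case=> [[ei ej] | [ej X_j ei]]; subst.
  rewrite YpathE => /edge_in_column_path [h /andP [h_lo h_hi] hy]; left.
  case: ej => ej; subst.
  - exists m, i', j, h; split => //; first by left.
    by apply/andP; have := ltn_height m (ltnSn j); lia.
  - exists m, i', j', h; split => //; first by right.
    by apply/andP; have := ltn_height m (ltnSn j'); lia.
have [em | ne_mn] := eqVneq m n.
  by subst m; rewrite /column eqxx YpathE => /edge_in_column_path [h /andP]; lia.
move=> /edge_in_rung yy'; right; split => //=; first by case: ei; lia.
by apply: yy'; rewrite /= /column (negbTE ne_mn) xpair_eqE eqxx /=; case: ei; lia.
Qed.

Definition fibre_columns (mc : nat * nat) := if mc.1 == n then iota 0 (f n) else [:: mc.2].

Lemma size_fibre_columns mc : size (fibre_columns mc) <= f n.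
Proof. by rewrite /fibre_columns; case: ifP; rewrite ?size_iota //=; lia. Qed.

Lemma mem_fibre_columns m i j : Xvert f ((m, i), j) -> i \in fibre_columns (m, column m i).
Proof.
case/and3P => _ lt_if _; rewrite /fibre_columns /column /=.
by case: eqVneq => [<- | _]; rewrite ?mem_iota ?inE.
Qed.

Hypothesis hsub : subgraphX f VG EG.

Lemma VG_Xvert u : u \in VG -> Xvert f u.
Proof. by case: hsub => _ /allP + _ _ _; apply. Qed.

Lemma EG_Xadj e : e \in EG -> [/\ e.1 \in VG, e.2 \in VG & Xadj f e.1 e.2].
Proof. by case: hsub => _ _ _ + _; apply. Qed.

Lemma EG_antisym u v : (u, v) \in EG -> (v, u) \notin EG.
Proof. by case: hsub => _ _ _ _; apply. Qed.

Lemma wire_vertex_count y : count (fun u => G u == y) VG <= f n.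
Proof.
apply: leq_trans (size_fibre_columns y.1); apply: (@count_leq_keys _ _ _ (fun u : vtx => u.1.2)).
- by case: hsub.
- move=> u u' _ _ /eqP + /eqP Gu'; rewrite -{}Gu' => /wire_vertex_eq [].
  by case: u u' => [[m i] j] [[m' i'] j'] /= -> -> _ ->.
- move=> [[m i] j] /VG_Xvert Xu /eqP <-; exact: mem_fibre_columns Xu.
Qed.

Lemma edge_in_column_wire e mc p : e \in EG -> edge_in (mc, p) (mc, p.+1) (W e) ->
  exists i j, [/\ e.1.1 = (mc.1, i), e.2.1 = (mc.1, i),
    (e.1.2 = j /\ e.2.2 = j.+1) \/ (e.1.2 = j.+1 /\ e.2.2 = j),
    column mc.1 i = mc.2 & height mc.1 j <= p < height mc.1 j.+1].
Proof.
move=> /EG_Xadj [_ _ adj] /(edge_in_wire_path adj).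
case=> [[m [i [j [h [e1 e2 ej h_range hy]]]]] | [ne_mn em ne_col yy']].
  case: hy => [[[-> ->] _] | [[_ ->] [_]]]; last lia.
  by exists i, j.
case/negP: ne_col; rewrite -wire_vertex_column // -[e.2.1.2]wire_vertex_column -?em //.
by case: yy' => [[-> ->] | [-> ->]].
Qed.

Lemma column_edge_count mc p :
  count (fun e => edge_in (mc, p) (mc, p.+1) (W e)) EG <= f n.
Proof.
apply: leq_trans (size_fibre_columns mc).
apply: (@count_leq_keys _ _ _ (fun e : vtx * vtx => e.1.1.2)); first by case: hsub.
- move=> e e' eE eE' /(edge_in_column_wire eE) [i [j [e1 e2 ej _ hp]]].
  move=> /(edge_in_column_wire eE') [i' [j' [e1' e2' ej' _ hp']]].
  rewrite e1 e1' /= => ei; subst i'.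
  have jj' := ltn_interval_index (ltn_height mc.1) hp hp'; subst j'.
  case: e e' eE eE' e1 e2 ej e1' e2' ej'
    => [[[m1 i1] j1] [[m2 i2] j2]] [[[m1' i1'] j1'] [[m2' i2'] j2']].
  move=> /= eE eE' [? ?] [? ?] ej [? ?] [? ?] ej'; subst.
  by case: ej ej' => [[? ?] | [? ?]] [[? ?] | [? ?]]; subst => //; case/negP: (EG_antisym eE).
- case: mc => m c e eE /(edge_in_column_wire eE) [i [j [e1 _ _ /= <- _]]].
  have [/VG_Xvert + _ _] := EG_Xadj eE.
  by case: e e1 {eE} => [[[m1 i1] j1] v] /= [-> ->] /mem_fibre_columns.
Qed.

Lemma rung_edge_count (y y' : vtx) : y.1.1 = y'.1.1 -> y.1.2 != y'.1.2 ->
  count (fun e => edge_in y y' (W e)) EG <= f n.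
Proof.
move=> em ne_col; have ne_y1 : y.1 != y'.1 by apply: contra ne_col => /eqP ->.
have rung e : e \in EG -> edge_in y y' (W e) -> [/\ e.1.1.1 != n, e.2.1.1 != n &
    (G e.1 = y /\ G e.2 = y') \/ (G e.1 = y' /\ G e.2 = y)].
  move=> /EG_Xadj [_ _ adj] /(edge_in_wire_path adj).
  case=> [[m [i [j [h [_ _ _ _ hy]]]]] | [ne_n <- _ hy]] //.
  by case/negP: ne_y1; case: hy => [[-> ->] | [-> ->]].
apply: leq_trans fn_ge2.
apply: (@count_leq_keys _ _ _ (fun e : vtx * vtx => e.1.1.2) [:: y.1.2; y'.1.2]).
- by case: hsub.
- move=> [u v] [u' v'] eE eE' /(rung _ eE) /= [ne_un ne_vn hy] /(rung _ eE') /= [ne_u'n _ hy'] ei.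
  have Gu : G u = G u'.
    have := wire_vertex_column ne_un; have := wire_vertex_column ne_u'n.
    by case: hy hy' => [] [-> _] [] [-> _] // => e1 e2; rewrite e1 e2 ei eqxx in ne_col.
  have Gv : G v = G v' by case: hy hy' Gu => [] [-> ->] [] [-> ->] //; rewrite ?eqxx in ne_y1.
  by rewrite (wire_vertex_inj ne_un Gu) (wire_vertex_inj ne_vn Gv).
- move=> e eE /(rung _ eE) [ne_en _ hy]; rewrite -wire_vertex_column //.
  by case: hy => [[-> _] | [-> _]]; rewrite !inE eqxx ?orbT.
Qed.

Lemma wire_edge_count y y' : Yadj f y y' -> count (fun e => edge_in y y' (W e)) EG <= f n.
Proof.
case: y y' => [[m c] h] [[m' c'] h'] /and4P [_ _ /eqP <-].
case/orP => [/andP [/eqP <- /orP [] /eqP ->] | /and3P [_ _ ne_c]].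
- exact: column_edge_count.
- by under eq_count do rewrite edge_inC; apply: column_edge_count.
- by apply: rung_edge_count => //=; case/orP: ne_c => /eqP ->; lia.
Qed.

Hypothesis n_ge2 : 2 <= n.
Hypothesis leq_f : forall m, 0 < m -> f m <= m.
Hypothesis hsize : size VG <= cardVXn f n.

Lemma cut_lt m t : n < m -> cut m t < baseX m.
Proof.
move=> lt_nm; rewrite /cut -[X in _ < X](size_iota 0) -has_find.
apply: contraT => /hasPn not_free.
have sub : {subset iota (t * baseX m) (baseX m) <= [seq u.2 | u <- VG & u.1.1 == m]}.
  move=> h; rewrite mem_iota => /andP [lo hi].
  have := not_free (h - t * baseX m); rewrite mem_iota /free_offset negbK subnKC //; apply; lia.
have := uniq_leq_size (iota_uniq _ _) sub; rewrite size_iota size_map.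
have : size [seq u <- VG | u.1.1 == m] <= size VG by rewrite size_filter count_size.
have := cardVXn_lt_baseX (leq_f (ltnW n_ge2)) lt_nm; move: hsize; rewrite /cardVXn; lia.
Qed.

Lemma cut_free m t u : n < m -> u \in VG -> u.1.1 = m -> u.2 != t * baseX m + cut m t.
Proof.
move=> lt_nm uV um; have lt_cut := cut_lt t lt_nm.
have : has (free_offset m t) (iota 0 (baseX m)) by rewrite has_find size_iota.
move=> /(nth_find 0); rewrite -/(cut m t) nth_iota // add0n.
by apply: contra => /eqP <-; apply: map_f; rewrite mem_filter um eqxx.
Qed.

Lemma heightS m i j : n <= m -> ((m, i), j) \in VG -> height m j.+1 = (height m j).+1.
Proof.
rewrite /height leq_eqVlt => /orP [/eqP <- _ | lt_nm uV]; first by rewrite eqxx.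
rewrite gtn_eqF //; apply: (stretchS (baseX_gt0 m) (leq_baseXY m)); first exact: cut_lt.
by have := cut_free (j %/ baseX m) lt_nm uV erefl; apply: contra => /eqP /= <-; rewrite -divn_eq.
Qed.

Lemma wire_path_high e : e \in EG -> n <= e.1.1.1 -> {subset wire_path e <= [:: G e.2]}.
Proof.
case: e => u v eE; have [/= uV vV adj] := EG_Xadj eE; rewrite /wire_path /=.
move: adj uV vV; case/gadj_cases=> m [i] [i'] [j] [j'] [-> -> _ _ + uV vV le_nm].
rewrite !wire_vertexE; case=> [[ei ej] | [ej _ ei]]; subst.
  rewrite YpathE; apply: column_path_short; rewrite /height_gap.
  rewrite /= in le_nm; case: ej => ej; subst;
    by rewrite ?(heightS le_nm uV) ?(heightS le_nm vV); case: ifP; lia.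
have [em | ne_mn] := eqVneq m n.
  subst m; rewrite /column eqxx YpathE.
  by apply: column_path_short; rewrite /height_gap leqnn subnn.
rewrite Ypath_rung //= /column (negbTE ne_mn) xpair_eqE eqxx /=; case: ei; lia.
Qed.

(* Contains Y_1, ..., Y_(n-1), since f m <= m < n. *)
Definition low_vertices : seq vtx :=
  [seq (mi, j) | mi <- [seq (m, i) | m <- iota 1 n.-1, i <- iota 0 n],
                 j <- iota 0 (baseY n.-1 * n).+1].

Lemma mem_low_vertices z : Yvert f z -> z.1.1 < n -> z \in low_vertices.
Proof.
case: z => [[m i] j] /and3P [m_ge1 lt_if le_j] /= lt_mn.
have le_fm := leq_f m_ge1.
apply: allpairs_f; [apply: allpairs_f |]; rewrite mem_iota; try lia.
have : baseY m * f m <= baseY n.-1 * n by apply: leq_mul; [apply: leq_baseY |]; lia.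
lia.
Qed.

Lemma size_low_vertices : size low_vertices <= cardVXn f n.
Proof. by rewrite !size_allpairs !size_iota; apply: low_components_bound. Qed.

Lemma wire_coarse : coarse_wiring (f n) f VG EG G wire_path.
Proof.
split; [split | exact: wire_vertex_count | exact: wire_edge_count].
- by move=> u /VG_Xvert /wire_vertex_Yvert.
- by move=> e /EG_Xadj [_ _ /wire_path_wiring].
Qed.

Lemma wire_image_sub :
  {subset map G VG ++ flatten (map (fun e => W e) EG) <= low_vertices ++ map G VG}.
Proof.
move=> z; rewrite !mem_cat => /orP [zV | /flattenP [s /mapP [e eE ->]]]; first by rewrite zV orbT.
have [e1V e2V adj] := EG_Xadj eE.
rewrite inE => /orP [/eqP -> | z_path]; first by rewrite map_f ?orbT.
case: (ltnP e.1.1.1 n) => [lt_en | le_ne].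
  have [path_e _ _] := wire_path_wiring adj.
  have zW : z \in W e by rewrite inE z_path orbT.
  have [Yz ez] := path_Yvert_component path_e (wire_vertex_Yvert (VG_Xvert e1V)) zW.
  by rewrite mem_low_vertices // ez.
by move: (wire_path_high eE le_ne z_path); rewrite inE => /eqP ->; rewrite map_f ?orbT.
Qed.

Lemma wire_volume : volume VG EG G wire_path <= 2 * cardVXn f n.
Proof.
rewrite /volume; set L := _ ++ _.
have sub : {subset undup L <= low_vertices ++ map G VG}.
  by move=> z; rewrite mem_undup; apply: wire_image_sub.
apply: leq_trans (uniq_leq_size (undup_uniq L) sub) _.
by rewrite size_cat size_map mul2n -addnn leq_add ?size_low_vertices.
Qed.

End Wiring.

Theorem lemma4p2 (f : nat -> nat) (hf : good_f f) (n : nat) (hn : 2 <= n)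
  (VG : seq vtx) (EG : seq (vtx * vtx)) :
  subgraphX f VG EG -> size VG <= cardVXn f n ->
  exists (gv : vtx -> vtx) (gp : vtx * vtx -> seq vtx),
    coarse_wiring (f n) f VG EG gv gp /\ volume VG EG gv gp <= 2 * cardVXn f n.
Proof.
move=> hsub hsize; case: hf => f1 f_bounds _ _.
have fn_ge2 : 2 <= f n by case/andP: (f_bounds n hn).
have leq_f m : 0 < m -> f m <= m.
  by case: m => [|[|m]] // _; [rewrite f1 | case/andP: (f_bounds m.+2 isT)].
exists (wire_vertex n VG), (wire_path n VG); split.
- exact: wire_coarse.
- exact: wire_volume.
Qed.
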